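(* Given an instance of school choice with feature-based uncertain preferences with exactly two features ($|F|=2$) and a matching $\pi$, the probability of stability $\mathsf{ProS}(\pi)$ can be computed in polynomial time (in fact in $O(mn)$ time, where $n=|N|$, $m=|M|$), given oracle access to the cumulative distribution functions of the weight distributions.
   Context: An instance consists of: a set $N$ of $n$ students; a set $M$ of $m$ colleges, each college $c$ with positive integer capacity $x_c$ and a strict preference $\succ_c$ over $N$; a finite set $F$ of features; for each student $s$ and feature $f$ a utility function $u_s^f:M\to[0,1]$; for each student $s$ a probability distribution $\mu_s$ over weight vectors $w_s=(w_s^f)_{f\in F}$ with $w_s^f\ge0$, $\sum_f w_s^f=1$. The distributions of different students are independent, and their p.d.f.s and c.d.f.s ($\Pr[\forall f,\ w_s^f\le w^f]$) can be evaluated in constant time. Every college is acceptable to every student and vice versa. For realized $w_s$, $c\succeq_s^{w_s}c'$ iff $\sum_f w_s^fu_s^f(c)\ge\sum_f w_s^fu_s^f(c')$, strict version $\succ_s^{w_s}$. A matching $\pi$ assigns each student to at most one college ($\pi(s)=\mathsf{null}$ if unmatched; any college is ranked above $\mathsf{null}$) so that each college $c$ receives a set $\pi(c)$ of at most $x_c$ students. Given realized weights, $\pi$ is (weakly) stable if there is no pair $(s,c)$ with $c\succ_s^{w_s}\pi(s)$ and either $|\pi(c)|<x_c$ or some $s'\in\pi(c)$ with $s\succ_c s'$. $\mathsf{ProS}(\pi)$ is the probability, over independent draws $w_s\sim\mu_s$ for all $s$, that $\pi$ is stable. *)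

From HB Require Import structures.
From mathcomp Require Import all_boot all_order all_algebra.
From mathcomp Require Import all_classical all_reals all_analysis.

Set Implicit Arguments.
Unset Strict Implicit.
Unset Printing Implicit Defensive.

Import Order.TTheory GRing.Theory Num.Theory.
Local Open Scope classical_set_scope.
Local Open Scope ring_scope.

(*   College c's strict preference over students is given by an injective    *)
(*   ranking  rank c : 'I_n -> nat ; s >_c s'  iff  rank c s < rank c s'.    *)
(*   A matching is pi : 'I_n -> option 'I_m (None = unmatched).              *)

Definition feat0 : 'I_2 := @Ordinal 2 0 isT.
Definition feat1 : 'I_2 := @Ordinal 2 1 isT.

Section Model.
Variables (R : realType) (n m : nat).

Definition in_simplex (w : R * R) : Prop := 0 <= w.1 /\ 0 <= w.2 /\ w.1 + w.2 = 1.

Definition score (u : 'I_n -> 'I_2 -> 'I_m -> R) (s : 'I_n) (w : R * R)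
  (c : 'I_m) : R := w.1 * u s feat0 c + w.2 * u s feat1 c.

Definition stud_prefers (u : 'I_n -> 'I_2 -> 'I_m -> R) (s : 'I_n) (w : R * R)
  (c : 'I_m) (o : option 'I_m) : Prop :=
  match o with
  | None => True
  | Some c' => score u s w c' < score u s w c
  end.

Definition assigned (pi : 'I_n -> option 'I_m) (c : 'I_m) : {set 'I_n} :=
  [set s | pi s == Some c].

Definition is_matching (cap : 'I_m -> nat) (pi : 'I_n -> option 'I_m) : Prop :=
  forall c, (#|assigned pi c| <= cap c)%N.

Definition blocking_pair (cap : 'I_m -> nat) (rank : 'I_m -> 'I_n -> nat)
  (u : 'I_n -> 'I_2 -> 'I_m -> R) (pi : 'I_n -> option 'I_m)
  (w : 'I_n -> R * R) (s : 'I_n) (c : 'I_m) : Prop :=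
  stud_prefers u s (w s) c (pi s) /\
  ((#|assigned pi c| < cap c)%N \/
   exists s', pi s' = Some c /\ (rank c s < rank c s')%N).

Definition stable (cap : 'I_m -> nat) (rank : 'I_m -> 'I_n -> nat)
  (u : 'I_n -> 'I_2 -> 'I_m -> R) (pi : 'I_n -> option 'I_m)
  (w : 'I_n -> R * R) : Prop :=
  forall s c, ~ blocking_pair cap rank u pi w s c.

Section Prob.
Context {d : measure_display} {T : measurableType d} (P : probability T R).

Definition mutually_independent (W : 'I_n -> T -> R * R) : Prop :=
  forall B : 'I_n -> set (R * R), (forall s, measurable (B s)) ->
    fine (P [set t | forall s, B s (W s t)]) =
    \prod_(s < n) fine (P ((W s) @^-1` (B s))).

Definition cdf_of (W : 'I_n -> T -> R * R) (s : 'I_n) (x y : R) : R :=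
  fine (P ((W s) @^-1` [set w | w.1 <= x /\ w.2 <= y])).

Definition ProS (cap : 'I_m -> nat) (rank : 'I_m -> 'I_n -> nat)
  (u : 'I_n -> 'I_2 -> 'I_m -> R) (pi : 'I_n -> option 'I_m)
  (W : 'I_n -> T -> R * R) : R :=
  fine (P [set t | stable cap rank u pi (fun s => W s t)]).
End Prob.
End Model.

(*   Programs are terms of a small first-order functional language with     *)
(*   exact real arithmetic, naturals, booleans, pairs, arrays, bounded loops *)
(*   and constant-time access to the input (instance data and c.d.f. oracle).*)
(*   Every evaluation step costs 1; creating an array of length k costs k+1. *)

Inductive value (R : Type) : Type :=
| VR of R
| VN of nat
| VB of bool
| VP of value R & value R
| VA of nat & (nat -> value R).   (* array: length and contents *)
Arguments VR {R}. Arguments VN {R}. Arguments VB {R}. Arguments VP {R}. Arguments VA {R}.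

Inductive expr : Type :=
| EVar of nat                        (* de Bruijn variable *)
| ENat of nat
| EBool of bool
| ERnat of nat                       (* real constant k%:R *)
| EAdd of expr & expr | ESub of expr & expr
| EMul of expr & expr | EDiv of expr & expr
| ELe of expr & expr | ELt of expr & expr          (* on reals *)
| ENAdd of expr & expr | ENSub of expr & expr
| ENMul of expr & expr
| ENLt of expr & expr | ENEq of expr & expr        (* on naturals *)
| ENot of expr | EAnd of expr & expr | EOr of expr & expr
| EIf of expr & expr & expr
| ELet of expr & expr                (* let x := e1 in e2 (x = EVar 0) *)
| EPair of expr & expr | EFst of expr | ESnd of expr
| ENewArr of expr & expr             (* new array of given length, filled *)
| EGet of expr & expr                (* a[i] *)
| ESet of expr & expr & expr         (* a[i := v] *)
| ELoop of expr & expr & expr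
    (* ELoop k init body : acc := init; for i = 0 .. k-1,
       acc := body evaluated with EVar 0 = acc, EVar 1 = i *)
| ENStud                             (* n *)
| ENColl                             (* m *)
| EUtil of expr & expr & expr        (* u_s^f(c) : feature f, student s, college c *)
| ERank of expr & expr               (* rank of student s for college c (c, s) *)
| ECap of expr                       (* capacity x_c *)
| EIsMatched of expr                 (* pi(s) <> null *)
| EMatchOf of expr                   (* pi(s) (0 if null) *)
| ECdf of expr & expr & expr.        (* oracle: c.d.f. of student s at (x, y) *)

Record input (R : Type) := Input {
  in_n : nat;
  in_m : nat;
  in_util : nat -> nat -> nat -> R;
  in_rank : nat -> nat -> nat;
  in_cap : nat -> nat;
  in_match : nat -> option nat;
  in_cdf : nat -> R -> R -> R }.

Section Eval.
Variable R : realType.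
Local Notation value := (value R).

Definition res := option (value * nat).

Definition ap1 (o : res) (f : value -> option value) : res :=
  match o with
  | Some (v, c) => omap (fun r => (r, c.+1)) (f v)
  | None => None
  end.

Definition ap2 (o1 o2 : res) (f : value -> value -> option value) : res :=
  match o1, o2 with
  | Some (v1, c1), Some (v2, c2) => omap (fun r => (r, (c1 + c2).+1)) (f v1 v2)
  | _, _ => None
  end.

Definition ap3 (o1 o2 o3 : res) (f : value -> value -> value -> option value) : res :=
  match o1, o2, o3 with
  | Some (v1, c1), Some (v2, c2), Some (v3, c3) =>
      omap (fun r => (r, (c1 + c2 + c3).+1)) (f v1 v2 v3)
  | _, _, _ => None
  end.

Definition rop (f : R -> R -> R) (a b : value) : option value :=
  match a, b with VR x, VR y => Some (VR (f x y)) | _, _ => None end.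
Definition rcmp (f : R -> R -> bool) (a b : value) : option value :=
  match a, b with VR x, VR y => Some (VB (f x y)) | _, _ => None end.
Definition nop (f : nat -> nat -> nat) (a b : value) : option value :=
  match a, b with VN x, VN y => Some (VN (f x y)) | _, _ => None end.
Definition ncmp (f : nat -> nat -> bool) (a b : value) : option value :=
  match a, b with VN x, VN y => Some (VB (f x y)) | _, _ => None end.
Definition bop (f : bool -> bool -> bool) (a b : value) : option value :=
  match a, b with VB x, VB y => Some (VB (f x y)) | _, _ => None end.

Fixpoint run (I : input R) (env : seq value) (e : expr) {struct e} : res :=
  match e with
  | EVar i => if (i < size env)%N then Some (nth (VN 0) env i, 1%N) else None
  | ENat k => Some (VN k, 1%N)
  | EBool b => Some (VB b, 1%N)
  | ERnat k => Some (VR k%:R, 1%N)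
  | EAdd a b => ap2 (run I env a) (run I env b) (rop +%R)
  | ESub a b => ap2 (run I env a) (run I env b) (rop (fun x y => x - y))
  | EMul a b => ap2 (run I env a) (run I env b) (rop *%R)
  | EDiv a b => ap2 (run I env a) (run I env b) (rop (fun x y => x / y))
  | ELe a b => ap2 (run I env a) (run I env b) (rcmp (fun x y => x <= y))
  | ELt a b => ap2 (run I env a) (run I env b) (rcmp (fun x y => x < y))
  | ENAdd a b => ap2 (run I env a) (run I env b) (nop addn)
  | ENSub a b => ap2 (run I env a) (run I env b) (nop subn)
  | ENMul a b => ap2 (run I env a) (run I env b) (nop muln)
  | ENLt a b => ap2 (run I env a) (run I env b) (ncmp (fun x y => x < y)%N)
  | ENEq a b => ap2 (run I env a) (run I env b) (ncmp (fun x y => x == y))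
  | ENot a => ap1 (run I env a)
                (fun v => if v is VB b then Some (VB (~~ b)) else None)
  | EAnd a b => ap2 (run I env a) (run I env b) (bop andb)
  | EOr a b => ap2 (run I env a) (run I env b) (bop orb)
  | EIf a b c =>
      match run I env a with
      | Some (VB true, c1) =>
          omap (fun p => (p.1, (c1 + p.2).+1)) (run I env b)
      | Some (VB false, c1) =>
          omap (fun p => (p.1, (c1 + p.2).+1)) (run I env c)
      | _ => None
      end
  | ELet a b =>
      match run I env a with
      | Some (v, c1) => omap (fun p => (p.1, (c1 + p.2).+1)) (run I (v :: env) b)
      | None => None
      end
  | EPair a b => ap2 (run I env a) (run I env b) (fun x y => Some (VP x y))
  | EFst a => ap1 (run I env a) (fun v => if v is VP x _ then Some x else None)
  | ESnd a => ap1 (run I env a) (fun v => if v is VP _ y then Some y else None)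
  | ENewArr a b =>
      match run I env a, run I env b with
      | Some (VN k, c1), Some (v, c2) =>
          Some (VA k (fun _ => v), (c1 + c2 + k).+1)
      | _, _ => None
      end
  | EGet a b => ap2 (run I env a) (run I env b)
      (fun x y => match x, y with
                  | VA k f, VN i => if (i < k)%N then Some (f i) else None
                  | _, _ => None end)
  | ESet a b c => ap3 (run I env a) (run I env b) (run I env c)
      (fun x y z => match x, y with
                  | VA k f, VN i =>
                      if (i < k)%N then
                        Some (VA k (fun j => if j == i then z else f j))
                      else None
                  | _, _ => None end)
  | ELoop a b body =>
      match run I env a, run I env b with
      | Some (VN k, c1), Some (v0, c2) =>
          let fix loop (j i : nat) (acc : value) (cost : nat) : res :=
            match j with
            | 0 => Some (acc, cost)
            | j'.+1 =>
                match run I (acc :: VN i :: env) body with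
                | Some (acc', c') => loop j' i.+1 acc' (cost + c')
                | None => None
                end
            end in
          loop k 0%N v0 (c1 + c2).+1
      | _, _ => None
      end
  | ENStud => Some (VN (in_n I), 1%N)
  | ENColl => Some (VN (in_m I), 1%N)
  | EUtil a b c => ap3 (run I env a) (run I env b) (run I env c)
      (fun x y z => match x, y, z with
                  | VN f, VN s, VN cc => Some (VR (in_util I f s cc))
                  | _, _, _ => None end)
  | ERank a b => ap2 (run I env a) (run I env b)
      (fun x y => match x, y with
                  | VN cc, VN s => Some (VN (in_rank I cc s))
                  | _, _ => None end)
  | ECap a => ap1 (run I env a)
      (fun x => if x is VN cc then Some (VN (in_cap I cc)) else None)
  | EIsMatched a => ap1 (run I env a)
      (fun x => if x is VN s then Some (VB (in_match I s != None)) else None)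
  | EMatchOf a => ap1 (run I env a)
      (fun x => if x is VN s then Some (VN (odflt 0%N (in_match I s))) else None)
  | ECdf a b c => ap3 (run I env a) (run I env b) (run I env c)
      (fun x y z => match x, y, z with
                  | VN s, VR p, VR q => Some (VR (in_cdf I s p q))
                  | _, _, _ => None end)
  end.

(* Encoding of an instance (with its c.d.f. oracle) as a program input;
   out-of-range indices return dummy values. *)
Definition mk_input (n m : nat) (cap : 'I_m -> nat) (rank : 'I_m -> 'I_n -> nat)
  (u : 'I_n -> 'I_2 -> 'I_m -> R) (pi : 'I_n -> option 'I_m)
  (cdf : 'I_n -> R -> R -> R) : input R :=
  {| in_n := n;
     in_m := m;
     in_util := fun f s c =>
       match (insub f : option 'I_2), (insub s : option 'I_n),
             (insub c : option 'I_m) with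
       | Some f', Some s', Some c' => u s' f' c'
       | _, _, _ => 0
       end;
     in_rank := fun c s =>
       match (insub c : option 'I_m), (insub s : option 'I_n) with
       | Some c', Some s' => rank c' s'
       | _, _ => 0%N
       end;
     in_cap := fun c =>
       match (insub c : option 'I_m) with Some c' => cap c' | None => 0%N end;
     in_match := fun s =>
       match (insub s : option 'I_n) with
       | Some s' => omap (@nat_of_ord m) (pi s')
       | None => None
       end;
     in_cdf := fun s x y =>
       match (insub s : option 'I_n) with Some s' => cdf s' x y | None => 0 end |}.
End Eval.

From HB Require Import structures.
From mathcomp Require Import all_boot all_order all_algebra.
From mathcomp Require Import all_classical all_reals all_analysis.
From mathcomp Require Import zify ring lra.
Import Order.TTheory GRing.Theory Num.Theory.

Set Implicit Arguments.
Unset Strict Implicit.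
Unset Printing Implicit Defensive.

(* With two features a weight vector is (x, 1 - x) for some x in [0, 1], and
   "s does not strictly prefer c to pi(s)" is a linear inequality in x.  A pair
   (s, c) can only block if c has a free seat or admits a student it ranks
   below s; this depends only on the number of students at c and the worst
   rank among them, which one pass over the students tabulates.  So pi is
   stable for the weights of s iff x lies in an intersection of m half-lines,
   an interval [L, U] computed in O(m) steps, and this event is the c.d.f.
   event {w^0 <= U, w^1 <= 1 - L}.  By independence ProS(pi) is the product of
   these n c.d.f. values. *)

Local Open Scope ring_scope.

Definition halfline_cut (R : realFieldType) (k b : R) (LU : R * R) : R * R :=
  if 0 < k then (Num.max LU.1 (b / k), LU.2)
  else if k < 0 then (LU.1, Num.min LU.2 (b / k))
  else if 0 < b then (1, 0) else LU.

Lemma halfline_cut_mem (R : realFieldType) (k b x : R) (LU : R * R) :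
  ((halfline_cut k b LU).1 <= x <= (halfline_cut k b LU).2) =
  (LU.1 <= x <= LU.2) && (b <= x * k).
Proof.
rewrite /halfline_cut; case: ltrgtP => [k_gt0|k_lt0|k0] /=.
- by rewrite ge_max ler_pdivrMr // andbAC.
- by rewrite le_min ler_ndivlMr // andbA.
- rewrite -k0 mulr0; case: (ltrP 0 b) => _ /=; last by rewrite andbT.
  by rewrite andbF; apply/negP => /andP[/le_trans le_1x /le_1x]; rewrite ler10.
Qed.

Lemma convex_score_le (R : numDomainType) (x a0 a1 b0 b1 : R) :
  (x * a0 + (1 - x) * a1 <= x * b0 + (1 - x) * b1) =
  (a1 - b1 <= x * ((a1 - b1) - (a0 - b0))).
Proof.
rewrite -subr_ge0 -[RHS]subr_ge0; congr (0 <= _); ring.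
Qed.

(* Environments are listed innermost binding first; a loop body sees
   [acc; i; env]. *)

(* env [arr; s]: arr[c] holds the number of students matched to c and the
   worst rank among them *)
Definition stats_step : expr :=
  EIf (EIsMatched (EVar 1))
    (ELet (EMatchOf (EVar 1))
      (ELet (EGet (EVar 1) (EVar 0))
        (ESet (EVar 2) (EVar 1)
          (EPair (ENAdd (EFst (EVar 0)) (ENat 1))
                 (ELet (ERank (EVar 1) (EVar 3))
                   (EIf (ENLt (ESnd (EVar 1)) (EVar 0)) (EVar 0) (ESnd (EVar 1))))))))
    (EVar 0).

Definition college_stats : expr :=
  ELoop ENStud (ENewArr ENColl (EPair (ENat 0) (ENat 0))) stats_step.

Definition empty_interval : expr := EPair (ERnat 1) (ERnat 0).

(* env [k; b; (L, U); _] *)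
Definition cut_code : expr :=
  EIf (ELt (ERnat 0) (EVar 0))
    (ELet (EDiv (EVar 1) (EVar 0))
      (EPair (EIf (ELt (EFst (EVar 3)) (EVar 0)) (EVar 0) (EFst (EVar 3)))
             (ESnd (EVar 3))))
    (EIf (ELt (EVar 0) (ERnat 0))
      (ELet (EDiv (EVar 1) (EVar 0))
        (EPair (EFst (EVar 3))
               (EIf (ELt (ESnd (EVar 3)) (EVar 0)) (ESnd (EVar 3)) (EVar 0))))
      (EIf (ELt (ERnat 0) (EVar 1)) empty_interval (EVar 2))).

(* env [(L, U); c; acc; s; stats] *)
Definition college_step : expr :=
  ELet (EGet (EVar 4) (EVar 1))
    (EIf (EOr (ENLt (EFst (EVar 0)) (ECap (EVar 2)))
              (ENLt (ERank (EVar 2) (EVar 4)) (ESnd (EVar 0))))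
      (EIf (EIsMatched (EVar 4))
        (ELet (EMatchOf (EVar 4))
          (ELet (EVar 2)
            (ELet (ESub (EUtil (ENat 1) (EVar 6) (EVar 4))
                        (EUtil (ENat 1) (EVar 6) (EVar 1)))
              (ELet (ESub (EVar 0) (ESub (EUtil (ENat 0) (EVar 7) (EVar 5))
                                         (EUtil (ENat 0) (EVar 7) (EVar 2))))
                cut_code))))
        empty_interval)
      (EVar 1)).

(* env [acc; s; stats] *)
Definition student_step : expr :=
  ELet (ELoop ENColl (EPair (ERnat 0) (ERnat 1)) college_step)
    (EMul (EVar 1) (ECdf (EVar 2) (ESnd (EVar 0)) (ESub (ERnat 1) (EFst (EVar 0))))).

Definition pros_program : expr :=
  ELet college_stats (ELoop ENStud (ERnat 1) student_step).

Section FixedInput.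
Variables (R : realType) (I : input R).

Definition assigned_count (j c : nat) : nat :=
  \sum_(i < j) (in_match I i == Some c).

Definition worst_assigned_rank (j c : nat) : nat :=
  \max_(i < j) (if in_match I i == Some c then in_rank I c i else 0%N).

Definition eligible (s c : nat) : bool :=
  (assigned_count (in_n I) c < in_cap I c)%N ||
  (in_rank I c s < worst_assigned_rank (in_n I) c)%N.

Definition weakly_prefers_match (s c : nat) (w : R * R) : bool :=
  if in_match I s is Some c' then
    w.1 * in_util I 0 s c + w.2 * in_util I 1 s c <=
    w.1 * in_util I 0 s c' + w.2 * in_util I 1 s c'
  else false.

Definition college_cut (s c : nat) (LU : R * R) : R * R :=
  if eligible s c then
    if in_match I s is Some c' then
      let b := in_util I 1 s c - in_util I 1 s c' in
      halfline_cut (b - (in_util I 0 s c - in_util I 0 s c')) b LU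
    else (1, 0)
  else LU.

Fixpoint admissible_interval (s j : nat) : R * R :=
  if j is j'.+1 then college_cut s j' (admissible_interval s j') else (0, 1).

(* For the empty interval (1, 0) the c.d.f. is read at (0, 0), where it
   vanishes on the simplex. *)
Definition interval_cdf (s : nat) : R :=
  in_cdf I s (admissible_interval s (in_m I)).2 (1 - (admissible_interval s (in_m I)).1).

Definition stability_product (j : nat) : R := \prod_(s < j) interval_cdf s.

Lemma worst_assigned_rank_gtP j c r :
  reflect (exists i : 'I_j, (in_match I i == Some c) && (r < in_rank I c i)%N)
          (r < worst_assigned_rank j c)%N.
Proof.
apply: (iffP idP) => [lt_r_worst|[i /andP[/eqP Ei lt_r_i]]]; last first.
  by apply: (leq_trans lt_r_i); apply: (leq_trans _ (leq_bigmax i)); rewrite Ei eqxx.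
apply/existsP; apply: contraLR lt_r_worst => /existsPn none.
rewrite -leqNgt; apply/bigmax_leqP => i _.
by move: (none i); case: eqP => //= _; rewrite -leqNgt.
Qed.

Lemma college_cut_mem s c LU (x : R) :
  ((college_cut s c LU).1 <= x <= (college_cut s c LU).2) =
  (LU.1 <= x <= LU.2) && (eligible s c ==> weakly_prefers_match s c (x, 1 - x)).
Proof.
rewrite /college_cut /weakly_prefers_match.
case: (eligible s c) => /=; last by rewrite andbT.
case: (in_match I s) => [c'|] /=; first by rewrite halfline_cut_mem convex_score_le.
by rewrite andbF; apply/negP => /andP[/le_trans le_1x /le_1x]; rewrite ler10.
Qed.

Lemma admissible_interval_mem s j (x : R) : 0 <= x <= 1 ->
  ((admissible_interval s j).1 <= x <= (admissible_interval s j).2) <->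
  (forall c, (c < j)%N -> eligible s c -> weakly_prefers_match s c (x, 1 - x)).
Proof.
move=> x01; elim: j => [|j IH] /=; first by split.
rewrite college_cut_mem; split.
  case/andP => /IH prefers_lt_j /implyP prefers_j c.
  by rewrite ltnS leq_eqVlt => /predU1P[->|/prefers_lt_j].
move=> prefers; apply/andP; split; last by apply/implyP; apply: prefers.
by apply/IH => c lt_c_j; apply: prefers; rewrite ltnS ltnW.
Qed.

Definition college_stats_value (j : nat) : value R :=
  VA (in_m I) (fun c => VP (VN (assigned_count j c)) (VN (worst_assigned_rank j c))).

Definition interval_value (LU : R * R) : value R := VP (VR LU.1) (VR LU.2).

Definition loop_iter (env : seq (value R)) (body : expr) :=
  fix loop (j i : nat) (acc : value R) (cost : nat) : res R :=
    match j with
    | 0 => Some (acc, cost)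
    | j'.+1 =>
        match run I (acc :: VN i :: env) body with
        | Some (acc', c') => loop j' i.+1 acc' (cost + c')
        | None => None
        end
    end.

Lemma run_loop env k0 init body : run I env (ELoop k0 init body) =
  match run I env k0, run I env init with
  | Some (VN k, c1), Some (v0, c2) => loop_iter env body k 0 v0 (c1 + c2).+1
  | _, _ => None
  end.
Proof. by []. Qed.

Lemma run_let env a b : run I env (ELet a b) =
  match run I env a with
  | Some (v, c1) => omap (fun p => (p.1, (c1 + p.2).+1)) (run I (v :: env) b)
  | None => None
  end.
Proof. by []. Qed.

Lemma loop_iter_inv env body (g : nat -> value R) (B j i cost : nat) :
  (forall i', (i <= i' < i + j)%N ->
     exists2 c, run I (g i' :: VN i' :: env) body = Some (g i'.+1, c) & (c <= B)%N) ->
  exists2 cost', loop_iter env body j i (g i) cost = Some (g (i + j)%N, cost')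
               & (cost' <= cost + j * B)%N.
Proof.
elim: j i cost => [|j IH] i cost step; first by exists cost; rewrite ?addn0.
have i_in : (i <= i < i + j.+1)%N by rewrite leqnn addnS ltnS leq_addr.
have [c Ei c_le] := step i i_in.
have [|cost' Eloop cost'_le] := IH i.+1 (cost + c)%N.
  by move=> i' /andP[lt_i_i' lt_i'_ij]; apply: step; rewrite ltnW //= -addSnnS.
exists cost'; first by rewrite /= Ei Eloop addSnnS.
by apply: (leq_trans cost'_le); rewrite mulSn addnA leq_add2r leq_add2l.
Qed.

Lemma run_loop_inv env k0 init body (g : nat -> value R) (k B c1 c2 : nat) :
  run I env k0 = Some (VN k, c1) -> run I env init = Some (g 0%N, c2) ->
  (forall i, (i < k)%N ->
     exists2 c, run I (g i :: VN i :: env) body = Some (g i.+1, c) & (c <= B)%N) ->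
  exists2 cost, run I env (ELoop k0 init body) = Some (g k, cost)
              & (cost <= (c1 + c2).+1 + k * B)%N.
Proof.
move=> Ek0 Einit step; rewrite run_loop Ek0 Einit.
by apply: (loop_iter_inv (i := 0)) => i /andP[_]; exact: step.
Qed.

Hypothesis match_lt_m : forall i c, in_match I i = Some c -> (c < in_m I)%N.

Lemma run_stats_step env j :
  exists2 cost, run I (college_stats_value j :: VN j :: env) stats_step
                  = Some (college_stats_value j.+1, cost) & (cost <= 30)%N.
Proof.
have statsS c : (assigned_count j.+1 c, worst_assigned_rank j.+1 c) =
    if in_match I j == Some c
    then ((assigned_count j c + 1)%N, maxn (worst_assigned_rank j c) (in_rank I c j))
    else (assigned_count j c, worst_assigned_rank j c).
  rewrite /assigned_count /worst_assigned_rank !big_ord_recr /=.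
  by case: eqP; rewrite ?addn0 ?maxn0.
rewrite /stats_step /=; case Ej: (in_match I j) => [c0|] /=; last first.
  suff -> : college_stats_value j.+1 = college_stats_value j by eexists.
  by congr VA; apply: funext => c; have := statsS c; rewrite Ej => -[-> ->].
have -> : college_stats_value j.+1 = VA (in_m I) (fun c =>
    if c == c0
    then VP (VN (assigned_count j c0 + 1))
            (VN (maxn (worst_assigned_rank j c0) (in_rank I c0 j)))
    else VP (VN (assigned_count j c)) (VN (worst_assigned_rank j c))).
  congr VA; apply: funext => c; have := statsS c; rewrite Ej (inj_eq Some_inj) eq_sym.
  by case: eqP => [->|_] [-> ->].
by rewrite (match_lt_m Ej) /maxn /=; case: ltnP => _ /=; eexists.
Qed.

Lemma run_cut_code env (k b : R) (LU : R * R) :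
  exists2 cost, run I (VR k :: VR b :: interval_value LU :: env) cut_code
    = Some (interval_value (halfline_cut k b LU), cost)
    & (cost <= 30)%N.
Proof.
by rewrite /cut_code /halfline_cut /=; case: ltrgtP => _ /=; case: ltP => _ /=; eexists.
Qed.

(* Otherwise [simpl] unfolds these subprograms and their evaluation lemmas no
   longer match. *)
Opaque cut_code.

Lemma run_college_step s c acc LU : (c < in_m I)%N ->
  exists2 cost, run I (interval_value LU :: VN c :: acc :: VN s ::
                       [:: college_stats_value (in_n I)]) college_step
                  = Some (interval_value (college_cut s c LU), cost)
              & (cost <= 100)%N.
Proof.
move=> lt_c_m; rewrite /college_step /= lt_c_m /= /college_cut /eligible.
case: (_ || _) => /=; last by eexists.
case: (in_match I s) => [c'|] /=; last by eexists.
set b := in_util I 1 s c - in_util I 1 s c'.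
set k := b - (in_util I 0 s c - in_util I 0 s c').
have [cost -> cost_le] := run_cut_code [:: VN c'; VP (VN (assigned_count (in_n I) c))
  (VN (worst_assigned_rank (in_n I) c)); interval_value LU; VN c; acc; VN s;
  college_stats_value (in_n I)] k b LU.
by rewrite /=; eexists; first by []; lia.
Qed.

Opaque college_step.

Lemma run_student_step s :
  exists2 cost, run I [:: VR (stability_product s); VN s; college_stats_value (in_n I)]
                      student_step
                  = Some (VR (stability_product s.+1), cost)
              & (cost <= 20 + in_m I * 100)%N.
Proof.
have [|cost Eloop cost_le] :=
  run_loop_inv (g := fun c => interval_value (admissible_interval s c)) (B := 100)
    (k0 := ENColl) (init := EPair (ERnat 0) (ERnat 1)) (c1 := 1%N) (c2 := 3%N)
    (env := [:: VR (stability_product s); VN s; college_stats_value (in_n I)])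
    (body := college_step) erefl erefl.
  by move=> c lt_c_m; apply: run_college_step.
rewrite /student_step run_let Eloop /= /stability_product big_ord_recr /=.
by eexists; first by []; lia.
Qed.

Lemma run_pros_program :
  exists2 cost, run I [::] pros_program = Some (VR (stability_product (in_n I)), cost)
              & (cost <= 200 * ((in_m I).+1 * (in_n I).+1))%N.
Proof.
have stats0 : run I [::] (ENewArr ENColl (EPair (ENat 0) (ENat 0)))
               = Some (college_stats_value 0, (1 + 3 + in_m I).+1).
  by congr (Some (VA _ _, _)); apply: funext => c;
    rewrite /assigned_count /worst_assigned_rank !big_ord0.
have product0 : run I [:: college_stats_value (in_n I)] (ERnat 1)
                 = Some (VR (stability_product 0), 1%N).
  by rewrite /stability_product big_ord0.
have [|cost1 Estats cost1_le] :=
  run_loop_inv (g := college_stats_value) (B := 30) (k0 := ENStud)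
    (env := [::]) (body := stats_step) erefl stats0.
  by move=> j _; apply: run_stats_step.
have [|cost2 Emain cost2_le] :=
  run_loop_inv (g := fun s => VR (stability_product s)) (B := 20 + in_m I * 100)
    (k0 := ENStud) (env := [:: college_stats_value (in_n I)]) (body := student_step)
    erefl product0.
  by move=> s _; apply: run_student_step.
rewrite /pros_program run_let Estats Emain /=.
by eexists; first by []; nia.
Qed.

End FixedInput.

Lemma in_simplexP (R : realType) (w : R * R) :
  in_simplex w -> 0 <= w.1 <= 1 /\ w = (w.1, 1 - w.1).
Proof.
case: w => x y [/= x_ge0 [y_ge0 xy1]]; split; first by apply/andP; split; lra.
by congr pair; lra.
Qed.

Lemma simplex_in_quadrant (R : realType) (w LU : R * R) : in_simplex w ->
  (w.1 <= LU.2 /\ w.2 <= 1 - LU.1) <-> (LU.1 <= w.1 <= LU.2).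
Proof.
case/in_simplexP => _ ->; rewrite /= lerD2l lerN2.
by split => [[-> ->]|/andP[-> ->]].
Qed.

Lemma measurable_quadrant (R : realType) (x y : R) :
  measurable [set w : R * R | w.1 <= x /\ w.2 <= y]%classic.
Proof.
have -> : [set w : R * R | w.1 <= x /\ w.2 <= y]%classic =
          (`]-oo, x] `*` `]-oo, y])%classic.
  by apply/seteqP; split => -[a b] /=; rewrite !in_itv /= => -[-> ->].
by apply: measurableX; apply: measurable_itv.
Qed.

Section Instance.
Variables (R : realType) (n m : nat) (cap : 'I_m -> nat) (rank : 'I_m -> 'I_n -> nat).
Variables (u : 'I_n -> 'I_2 -> 'I_m -> R) (pi : 'I_n -> option 'I_m).
Variable cdf : 'I_n -> R -> R -> R.

Local Notation I := (mk_input cap rank u pi cdf).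

Lemma mk_input_match_lt i c : in_match I i = Some c -> (c < in_m I)%N.
Proof.
rewrite /=; case: insubP => [s _ _|_] //.
by case: (pi s) => //= c' [<-]; apply: ltn_ord.
Qed.

Lemma mk_input_match (s : 'I_n) : in_match I s = omap val (pi s).
Proof. by rewrite /= valK. Qed.

Lemma assigned_count_mk_input (c : 'I_m) : assigned_count I n c = #|assigned pi c|.
Proof.
rewrite /assigned_count /assigned -sum1_card [RHS]big_mkcond.
apply: eq_bigr => s _; rewrite inE mk_input_match.
by case: (pi s) => [c'|] //=; rewrite (inj_eq val_inj); case: eqP.
Qed.

Lemma eligible_mk_input (s : 'I_n) (c : 'I_m) :
  eligible I s c <->
  (#|assigned pi c| < cap c)%N \/ exists s', pi s' = Some c /\ (rank c s < rank c s')%N.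
Proof.
rewrite /eligible assigned_count_mk_input /= !valK.
split => [/orP[|/worst_assigned_rank_gtP[s' /andP[]]]|[|[s' [pi_s' lt_s_s']]]].
- by left.
- rewrite mk_input_match /= !valK.
  case E: (pi s') => [c'|] //= /eqP[/val_inj c'c] lt_s_s'.
  by right; exists s'; rewrite E c'c.
- by move=> ->.
- apply/orP; right; apply/worst_assigned_rank_gtP; exists s'.
  by rewrite mk_input_match pi_s' eqxx /= !valK.
Qed.

Lemma weakly_prefers_match_mk_input (s : 'I_n) (c : 'I_m) (w : R * R) :
  weakly_prefers_match I s c w <-> ~ stud_prefers u s w c (pi s).
Proof.
rewrite /weakly_prefers_match mk_input_match /stud_prefers /score.
case: (pi s) => [c'|] /=; last by split.
by rewrite !valK (valK feat0) (valK feat1) leNgt; split => /negP.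
Qed.

Lemma stable_mk_input (w : 'I_n -> R * R) : (forall s, in_simplex (w s)) ->
  stable cap rank u pi w <->
  forall s : 'I_n, let LU := admissible_interval I s m in LU.1 <= (w s).1 <= LU.2.
Proof.
move=> w_simplex; split => [stable_w s | admissible s c [prefers blocking]].
  have [w01 w_eta] := in_simplexP (w_simplex s).
  apply/admissible_interval_mem => // c lt_c_m.
  move=> /(eligible_mk_input s (Ordinal lt_c_m)) blocking.
  rewrite -w_eta; apply/(weakly_prefers_match_mk_input s (Ordinal lt_c_m)) => prefers.
  exact: (stable_w s (Ordinal lt_c_m)).
have [w01 w_eta] := in_simplexP (w_simplex s).
have /admissible_interval_mem /(_ c (ltn_ord c)) := admissible s.
rewrite -w_eta => /(_ w01 (iffRL (eligible_mk_input s c) blocking)).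
by move/weakly_prefers_match_mk_input.
Qed.

End Instance.

Theorem proposition1 :
  exists (prog : expr) (C : nat),
  forall (R : realType) (n m : nat)
    (cap : 'I_m -> nat) (rank : 'I_m -> 'I_n -> nat)
    (u : 'I_n -> 'I_2 -> 'I_m -> R) (pi : 'I_n -> option 'I_m)
    (d : measure_display) (T : measurableType d) (P : probability T R)
    (W : 'I_n -> T -> R * R),
    (forall c, 0 < cap c)%N ->
    (forall c, injective (rank c)) ->
    (forall s f c, 0 <= u s f c <= 1) ->
    is_matching cap pi ->
    (forall s, measurable_fun setT (W s)) ->
    (forall s t, in_simplex (W s t)) ->
    mutually_independent P W ->
    exists cost : nat,
      run (mk_input cap rank u pi (cdf_of P W)) [::] prog
        = Some (VR (ProS P cap rank u pi W), cost)
      /\ (cost <= C * (m.+1 * n.+1))%N.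
Proof.
exists pros_program, 200%N => R n m cap rank u pi d T P W _ _ _ _ _ W_simplex W_indep.
set I := mk_input cap rank u pi (cdf_of P W).
have [cost Erun cost_le] :=
  run_pros_program (@mk_input_match_lt R n m cap rank u pi (cdf_of P W)).
exists cost; split => //; rewrite Erun; congr (Some (VR _, _)).
pose quadrant (s : 'I_n) := let LU := admissible_interval I s m in
  [set w : R * R | w.1 <= LU.2 /\ w.2 <= 1 - LU.1]%classic.
have stableE : [set t | stable cap rank u pi (W^~ t)]%classic =
               [set t | forall s, quadrant s (W s t)]%classic.
  apply/seteqP; split => t /=;
    rewrite (stable_mk_input _ _ _ _ (cdf_of P W) (W_simplex^~ t)) => mem_W s;
    by apply/(simplex_in_quadrant (admissible_interval I s m) (W_simplex s t));
       apply: mem_W.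
rewrite /ProS stableE (W_indep quadrant) => [|s]; last exact: measurable_quadrant.
by apply: eq_bigr => s _; rewrite /interval_cdf /= valK.
Qed.
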